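(* Let $(A,\vdash_A,\dashv_A)$ be a vector space with multiplications satisfying (ND1), (ND2), (ND3) (a transformed pre-Leibniz algebra), and define $$x\succ_A y=x\vdash_A y+2\,y\dashv_A x,\qquad x\prec_A y=-y\dashv_A x-2\,x\vdash_A y,\quad\forall x,y\in A.$$ Then $(A,\succ_A,\prec_A)$ is an anti-pre-Leibniz algebra if and only if $(A,\vdash_A,\dashv_A)$ is a Novikov dialgebra. Moreover, in this case $(A,\succ_A,\prec_A)$ is an admissible Novikov dialgebra.
   Context: All vector spaces are over a field $\mathbb K$ of characteristic zero. Identities for multiplications $\vdash_A,\dashv_A$, for all $x,y,z$: (ND1) $x\vdash_A(y\vdash_A z)=(x\vdash_A y)\vdash_A z-(y\dashv_A x)\vdash_A z+y\vdash_A(x\vdash_A z)$; (ND2) $(y\vdash_A z)\dashv_A x=y\vdash_A(z\dashv_A x)-z\dashv_A(y\vdash_A x)+(z\dashv_A y)\dashv_A x$; (ND3) $z\dashv_A(x\vdash_A y)=z\dashv_A(x\dashv_A y)$; (ND4) $(z\dashv_A y)\dashv_A x=(z\dashv_A x)\dashv_A y$; (ND5) $(y\dashv_A x)\vdash_A z=(y\vdash_A z)\dashv_A x=(y\vdash_A x)\vdash_A z$. A Novikov dialgebra is $(A,\vdash_A,\dashv_A)$ satisfying (ND1)–(ND5). For multiplications $\succ_A,\prec_A$ set $x\circ_A y=x\succ_A y+x\prec_A y$. Identities: (AL1) $(x\circ_A y)\prec_A z=x\succ_A(y\circ_A z)-y\succ_A(x\circ_A z)$; (AL2) $(x\circ_A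 y)\succ_A z=y\succ_A(x\succ_A z)-x\succ_A(y\succ_A z)$; (AL3) $x\prec_A(y\circ_A z)=(y\succ_A x)\prec_A z-y\succ_A(x\prec_A z)$; (AL4) $(x\succ_A y)\prec_A z=-(y\prec_A x)\prec_A z$; (AN1) $(x\succ_A y)\succ_A z=-(y\prec_A x)\succ_A z$; (AN2) $x\prec_A(y\prec_A z)-y\prec_A(x\prec_A z)=2(x\prec_A y)\prec_A z-2(y\prec_A x)\prec_A z$; (AN3) $(x\succ_A y)\succ_A z+y\prec_A(x\succ_A z)=2x\succ_A(y\circ_A z)$. An anti-pre-Leibniz algebra satisfies (AL1)–(AL4); an admissible Novikov dialgebra satisfies (AL2)–(AL4) and (AN1)–(AN3). *)

From HB Require Import structures.
From mathcomp Require Import all_boot all_order all_algebra.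
Set Implicit Arguments. Unset Strict Implicit. Unset Printing Implicit Defensive.
Import GRing.Theory.
Local Open Scope ring_scope.

Section Identities.
Variables (K : fieldType) (V : lmodType K).

Definition bilinear_mul (m : V -> V -> V) : Prop :=
  (forall (a : K) x y z, m (a *: x + y) z = a *: m x z + m y z) /\
  (forall (a : K) x y z, m x (a *: y + z) = a *: m x y + m x z).

Section ND.
Variables (l r : V -> V -> V). (* l = |-_A , r = -|_A ; l x y = x |- y, r x y = x -| y *)
Definition ND1 := forall x y z,
  l x (l y z) = l (l x y) z - l (r y x) z + l y (l x z).
Definition ND2 := forall x y z,
  r (l y z) x = l y (r z x) - r z (l y x) + r (r z y) x.
Definition ND3 := forall x y z, r z (l x y) = r z (r x y).
Definition ND4 := forall x y z, r (r z y) x = r (r z x) y.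
Definition ND5 := forall x y z,
  l (r y x) z = r (l y z) x /\ r (l y z) x = l (l y x) z.

Definition transformed_pre_Leibniz := [/\ ND1, ND2 & ND3].
Definition Novikov_dialgebra := [/\ ND1, ND2, ND3, ND4 & ND5].
End ND.

Section AL.
Variables (s p : V -> V -> V). (* s = succ_A, p = prec_A *)
Let o x y := s x y + p x y.
Definition AL1 := forall x y z, p (o x y) z = s x (o y z) - s y (o x z).
Definition AL2 := forall x y z, s (o x y) z = s y (s x z) - s x (s y z).
Definition AL3 := forall x y z, p x (o y z) = p (s y x) z - s y (p x z).
Definition AL4 := forall x y z, p (s x y) z = - p (p y x) z.
Definition AN1 := forall x y z, s (s x y) z = - s (p y x) z.
Definition AN2 := forall x y z,
  p x (p y z) - p y (p x z) = 2%:R *: p (p x y) z - 2%:R *: p (p y x) z.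
Definition AN3 := forall x y z, s (s x y) z + p y (s x z) = 2%:R *: s x (o y z).

Definition anti_pre_Leibniz := [/\ AL1, AL2, AL3 & AL4].
Definition admissible_Novikov_dialgebra := [/\ AL2, AL3, AL4 & [/\ AN1, AN2 & AN3]].
End AL.

Definition succ_of (l r : V -> V -> V) : V -> V -> V :=
  fun x y => l x y + 2%:R *: r y x.
Definition prec_of (l r : V -> V -> V) : V -> V -> V :=
  fun x y => - r y x - 2%:R *: l x y.
End Identities.

From mathcomp Require Import all_boot all_order all_algebra.
Set Implicit Arguments. Unset Strict Implicit. Unset Printing Implicit Defensive.
Import GRing.Theory.
Local Open Scope ring_scope.

(* After expanding [succ_of]/[prec_of] by bilinearity, every identity involved
   becomes a linear relation among products of two factors [l]/[r] applied to
   x, y, z in some order. Each AL/AN identity for (succ, prec) is an integer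
   combination of instances of ND1-ND5, which gives the "if" direction and the
   admissibility claim. Conversely, 6 ND4 and 6 ND5 are integer combinations of
   ND1-ND3 and AL1-AL3, so characteristic zero recovers ND4 and ND5. *)

Inductive zterm := ZAtom of nat | ZAdd of zterm & zterm | ZOpp of zterm
                 | ZZero | ZMuln of zterm & nat.

Section ZtermEval.
Variable V : zmodType.

Fixpoint zeval (env : seq V) t : V :=
  match t with
  | ZAtom i => env`_i
  | ZAdd a b => zeval env a + zeval env b
  | ZOpp a => - zeval env a
  | ZZero => 0
  | ZMuln a n => zeval env a *+ n
  end.

Fixpoint zcoef t (i : nat) : int :=
  match t with
  | ZAtom j => (i == j)%:Z
  | ZAdd a b => zcoef a i + zcoef b i
  | ZOpp a => - zcoef a i
  | ZZero => 0
  | ZMuln a n => zcoef a i * n%:Z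
  end.

Lemma zeval_coef env t : zeval env t = \sum_(i < size env) env`_i *~ zcoef t i.
Proof.
elim: t => [j|a iha b ihb|a iha||a iha n] /=.
- case: (ltnP j (size env)) => hj.
    rewrite (bigD1 (Ordinal hj)) //= eqxx mulr1z big1 ?addr0 //.
    by move=> i /negbTE; rewrite -val_eqE /= => ->; rewrite mulr0z.
  rewrite nth_default // big1 // => i _; case: eqP => [ij|]; last by rewrite mulr0z.
  by move: (ltn_ord i); rewrite ij ltnNge hj.
- by rewrite iha ihb -big_split; apply: eq_bigr => i _; rewrite mulrzDr.
- by rewrite iha -sumrN; apply: eq_bigr => i _; rewrite mulrNz.
- by rewrite big1 // => i _; rewrite mulr0z.
- by rewrite iha -sumrMnl; apply: eq_bigr => i _; rewrite mulrzA.
Qed.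

Lemma zeval_eq0 env t :
  all (fun i => zcoef t i == 0) (iota 0 (size env)) -> zeval env t = 0.
Proof.
move=> /allP t0; rewrite zeval_coef big1 // => i _.
by rewrite (eqP (t0 i _)) ?mulr0z // mem_iota /=.
Qed.

Lemma eq0_addrel (k : nat) (X u v : V) : u = v -> X + (u - v) *+ k = 0 -> X = 0.
Proof. by move=> ->; rewrite subrr mul0rn addr0. Qed.

End ZtermEval.

Arguments eq0_addrel {V} k {X u v}.

Ltac zmem x env :=
  match env with
  | nil => constr:(false)
  | cons x _ => constr:(true)
  | cons _ ?t => zmem x t
  end.

Ltac zatoms t env :=
  match t with
  | ?a + ?b => let e := zatoms a env in zatoms b e
  | - ?a => zatoms a env
  | 0 => env
  | ?a *+ _ => zatoms a env
  | _ => match zmem t env with true => env | false => constr:(cons t env) end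
  end.

Ltac zindex x env :=
  match env with
  | cons x _ => constr:(0%N)
  | cons _ ?t => let n := zindex x t in constr:(S n)
  end.

Ltac zreify t env :=
  match t with
  | ?a + ?b => let ea := zreify a env in let eb := zreify b env in constr:(ZAdd ea eb)
  | - ?a => let ea := zreify a env in constr:(ZOpp ea)
  | 0 => constr:(ZZero)
  | ?a *+ ?n => let ea := zreify a env in constr:(ZMuln ea n)
  | _ => let i := zindex t env in constr:(ZAtom i)
  end.

(* Closes [t = 0] when [t] is a sum of atoms whose integer coefficients all
   vanish; anything not built from [+], [-], [0], [*+] is an atom. *)
Ltac zmod_lincomb :=
  match goal with |- ?t = 0 =>
    let T := type of t in
    let env := zatoms t (@nil T) in
    let e := zreify t env in
    apply: (@zeval_eq0 _ env e); vm_compute; reflexivity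
  end.

Lemma eq_of_natmul_subr0 (K : fieldType) (V : lmodType K) (a b : V) (d : nat) :
  [pchar K] =i pred0 -> (0 < d)%N -> (a - b) *+ d = 0 -> a = b.
Proof.
move=> /GRing.pcharf0P charK0; case: d => // d _.
by rewrite -scaler_nat => /eqP; rewrite scaler_eq0 charK0 subr_eq0 => /orP[|/eqP].
Qed.

Section Bilinear.
Variables (K : fieldType) (V : lmodType K) (m : V -> V -> V).
Hypothesis hm : bilinear_mul m.

Lemma bmulDl x y z : m (x + y) z = m x z + m y z.
Proof. by have := hm.1 1 x y z; rewrite !scale1r. Qed.

Lemma bmulDr x y z : m z (x + y) = m z x + m z y.
Proof. by have := hm.2 1 z x y; rewrite !scale1r. Qed.

Lemma bmul0l z : m 0 z = 0.
Proof. by apply: (addrI (m 0 z)); rewrite -bmulDl !addr0. Qed.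

Lemma bmul0r z : m z 0 = 0.
Proof. by apply: (addrI (m z 0)); rewrite -bmulDr !addr0. Qed.

Lemma bmulZl a x z : m (a *: x) z = a *: m x z.
Proof. by have := hm.1 a x 0 z; rewrite !addr0 bmul0l addr0. Qed.

Lemma bmulZr a x z : m z (a *: x) = a *: m z x.
Proof. by have := hm.2 a z x 0; rewrite !addr0 bmul0r addr0. Qed.

Lemma bmulNl x z : m (- x) z = - m x z.
Proof. by rewrite -scaleN1r bmulZl scaleN1r. Qed.

Lemma bmulNr x z : m z (- x) = - m z x.
Proof. by rewrite -scaleN1r bmulZr scaleN1r. Qed.

End Bilinear.

Section Transformation.
Variables (K : fieldType) (V : lmodType K) (l r : V -> V -> V).
Hypotheses (hl : bilinear_mul l) (hr : bilinear_mul r).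
Hypotheses (h1 : ND1 l r) (h2 : ND2 l r) (h3 : ND3 l r).

Local Notation succ := (succ_of l r).
Local Notation prec := (prec_of l r).

Ltac expand :=
  cbv beta zeta delta [succ_of prec_of];
  rewrite ?(bmulDl hl, bmulDr hl, bmulNl hl, bmulNr hl, bmulZl hl, bmulZr hl,
            bmulDl hr, bmulDr hr, bmulNl hr, bmulNr hr, bmulZl hr, bmulZr hr,
            scaler_nat).

(* Each proof below is a certificate: [eq0_addrel k e] adds k times the
   relation [e] (as lhs - rhs) to the goal [lhs - rhs = 0], and [combine]
   checks that the resulting combination vanishes after expansion. *)
Ltac combine := expand; zmod_lincomb.

Lemma AL1_of_Novikov : ND4 r -> ND5 l r -> AL1 succ prec.
Proof.
move=> h4 h5; rewrite /AL1 => x y z; apply/subr0_eq.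
apply: (eq0_addrel 2 (h1 x y z)); apply: (eq0_addrel 3 (h1 y x z)).
apply: (eq0_addrel 1 (h2 x y z)); apply: (eq0_addrel 1 (esym (h2 y x z))).
apply: (eq0_addrel 1 (esym (h3 y x z))); apply: (eq0_addrel 3 (h4 x y z)).
apply: (eq0_addrel 3 (esym (h5 y x z).1)); apply: (eq0_addrel 3 (esym (h5 x y z).2)).
by combine.
Qed.

Lemma AL2_of_ND4 : ND4 r -> AL2 succ prec.
Proof.
move=> h4; rewrite /AL2 => x y z; apply/subr0_eq.
apply: (eq0_addrel 1 (esym (h1 x y z))); apply: (eq0_addrel 2 (esym (h2 x y z))).
apply: (eq0_addrel 2 (h2 y x z)); apply: (eq0_addrel 2 (h3 y x z)).
apply: (eq0_addrel 6 (esym (h4 x y z))).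
by combine.
Qed.

Lemma AL3_of_ND5 : ND5 l r -> AL3 succ prec.
Proof.
move=> h5; rewrite /AL3 => x y z; apply/subr0_eq.
apply: (eq0_addrel 2 (h1 y x z)); apply: (eq0_addrel 1 (esym (h2 x y z))).
apply: (eq0_addrel 2 (esym (h2 y x z))); apply: (eq0_addrel 2 (h3 x y z)).
apply: (eq0_addrel 6 (esym (h5 y x z).1)).
by combine.
Qed.

Lemma AL4_of_ND5 : ND5 l r -> AL4 succ prec.
Proof.
move=> h5; rewrite /AL4 => x y z; apply/subr0_eq.
apply: (eq0_addrel 2 (esym (h1 x y z))); apply: (eq0_addrel 2 (esym (h1 y x z))).
apply: (eq0_addrel 1 (h3 x y z)); apply: (eq0_addrel 2 (esym (h3 y x z))).
apply: (eq0_addrel 6 (h5 x y z).1); apply: (eq0_addrel 6 (h5 x y z).2).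
by combine.
Qed.

Lemma AN1_of_ND5 : ND5 l r -> AN1 succ prec.
Proof.
move=> h5; rewrite /AN1 => x y z; apply/subr0_eq.
apply: (eq0_addrel 1 (h1 x y z)); apply: (eq0_addrel 1 (h1 y x z)).
apply: (eq0_addrel 2 (esym (h3 x y z))); apply: (eq0_addrel 4 (h3 y x z)).
apply: (eq0_addrel 3 (esym (h5 x y z).1)); apply: (eq0_addrel 3 (esym (h5 x y z).2)).
by combine.
Qed.

Lemma AN2_of_Novikov : ND4 r -> ND5 l r -> AN2 prec.
Proof.
move=> h4 h5; rewrite /AN2 => x y z; apply/subr0_eq.
apply: (eq0_addrel 8 (esym (h1 x y z))); apply: (eq0_addrel 4 (esym (h1 y x z))).
apply: (eq0_addrel 2 (esym (h2 x y z))); apply: (eq0_addrel 2 (h2 y x z)).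
apply: (eq0_addrel 2 (h3 x y z)); apply: (eq0_addrel 2 (esym (h3 y x z))).
apply: (eq0_addrel 3 (esym (h4 x y z))).
apply: (eq0_addrel 12 (h5 x y z).1); apply: (eq0_addrel 12 (h5 x y z).2).
by combine.
Qed.

Lemma AN3_of_ND5 : ND5 l r -> AN3 succ prec.
Proof.
move=> h5; rewrite /AN3 => x y z; apply/subr0_eq.
apply: (eq0_addrel 1 (h1 x y z)); apply: (eq0_addrel 3 (h1 y x z)).
apply: (eq0_addrel 4 (esym (h2 x y z))); apply: (eq0_addrel 2 (esym (h2 y x z))).
apply: (eq0_addrel 4 (h3 y x z)).
apply: (eq0_addrel 3 (esym (h5 x y z).1)); apply: (eq0_addrel 3 (esym (h5 y x z).1)).
apply: (eq0_addrel 3 (esym (h5 x y z).2)).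
by combine.
Qed.

Lemma anti_pre_Leibniz_of_Novikov :
  ND4 r -> ND5 l r -> anti_pre_Leibniz succ prec.
Proof.
move=> h4 h5; split; [exact: AL1_of_Novikov | exact: AL2_of_ND4 |
                      exact: AL3_of_ND5 | exact: AL4_of_ND5].
Qed.

Lemma admissible_Novikov_of_Novikov :
  ND4 r -> ND5 l r -> admissible_Novikov_dialgebra succ prec.
Proof.
move=> h4 h5; split; [exact: AL2_of_ND4 | exact: AL3_of_ND5 | exact: AL4_of_ND5 |].
by split; [exact: AN1_of_ND5 | exact: AN2_of_Novikov | exact: AN3_of_ND5].
Qed.

Hypothesis charK0 : [pchar K] =i pred0.

Lemma ND4_of_AL2 : AL2 succ prec -> ND4 r.
Proof.
move=> a2 x y z; apply: (eq_of_natmul_subr0 (d := 6)) => //.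
apply: (eq0_addrel 1 (h1 x y z)); apply: (eq0_addrel 2 (h2 x y z)).
apply: (eq0_addrel 2 (esym (h2 y x z))); apply: (eq0_addrel 2 (esym (h3 y x z))).
apply: (eq0_addrel 1 (esym (a2 x y z))).
by combine.
Qed.

Lemma ND5_of_anti_pre_Leibniz :
  AL1 succ prec -> AL2 succ prec -> AL3 succ prec -> ND5 l r.
Proof.
move=> a1 a2 a3 x y z; split; apply: (eq_of_natmul_subr0 (d := 6)) => //.
- apply: (eq0_addrel 2 (esym (h1 x y z))); apply: (eq0_addrel 2 (h2 x y z)).
  apply: (eq0_addrel 1 (h2 y x z)); apply: (eq0_addrel 2 (esym (h3 y x z))).
  apply: (eq0_addrel 1 (esym (a3 y x z))).
  by combine.
- apply: (eq0_addrel 3 (esym (h1 x y z))); apply: (eq0_addrel 4 (esym (h1 y x z))).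
  apply: (eq0_addrel 1 (esym (h2 x y z))); apply: (eq0_addrel 2 (esym (h2 y x z))).
  apply: (eq0_addrel 2 (h3 x y z)); apply: (eq0_addrel 2 (esym (a1 x y z))).
  apply: (eq0_addrel 1 (esym (a2 x y z))); apply: (eq0_addrel 1 (a3 x y z)).
  by combine.
Qed.

End Transformation.

Theorem proposition3p5 (K : fieldType) (hK : [pchar K] =i pred0)
  (V : lmodType K) (l r : V -> V -> V)
  (hl : bilinear_mul l) (hr : bilinear_mul r)
  (hT : transformed_pre_Leibniz l r) :
  (anti_pre_Leibniz (succ_of l r) (prec_of l r) <-> Novikov_dialgebra l r) /\
  (Novikov_dialgebra l r ->
     admissible_Novikov_dialgebra (succ_of l r) (prec_of l r)).
Proof.
case: hT => h1 h2 h3; split; [split|].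
- case=> a1 a2 a3 _; split=> //.
  + exact: ND4_of_AL2 hl hr h1 h2 h3 hK a2.
  + exact: ND5_of_anti_pre_Leibniz hl hr h1 h2 h3 hK a1 a2 a3.
- by case=> _ _ _ h4 h5; apply: anti_pre_Leibniz_of_Novikov.
- by case=> _ _ _ h4 h5; apply: admissible_Novikov_of_Novikov.
Qed.
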